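(* Let $\alpha,\beta,\mu\in\mathbb{R}\setminus\{0\}$ with $\Delta:=\alpha^2+\beta^2-2\mu^2>0$, $x_1,x_2\in\mathbb{R}$, and let $B=B^{nv}_{\alpha,\beta,\mu}$ be the mKdV breather with nonvanishing boundary value $\mu$. Let $\tilde B(t,x):=\mu x+2\sqrt2\arctan(g/f)$ (a smooth continuous-branch determination, so $\partial_x\tilde B=B$) and $\mathcal{M}_{nv}(t,x):=\frac12\int_{-\infty}^x(B^2(t,s)-\mu^2)\,ds$. Then for all $t\in\mathbb{R}$, $$B_{xt}+2(\partial_t\mathcal{M}_{nv})B=\big(2(\beta^2-\alpha^2)+5\mu^2\big)\partial_t\tilde B+\Big((\alpha^2+\beta^2)^2+6\mu^2\big(\beta^2-\alpha^2+\tfrac32\mu^2\big)\Big)(B-\mu).$$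
   Context: With $\delta:=\alpha^2-3\beta^2$, $\gamma:=3\alpha^2-\beta^2$, $y_1:=x+\delta t+x_1$, $y_2:=x+\gamma t+x_2$, $$G_\mu(t,x):=\frac{\beta\sqrt{\alpha^2+\beta^2}}{\alpha\sqrt{\Delta}}\sin(\alpha y_1)-\frac{\sqrt2\,\mu\beta\, e^{\beta y_2}}{\Delta},\qquad F_\mu(t,x):=\cosh(\beta y_2)-\frac{\sqrt2\,\mu\beta\,[\alpha\cos(\alpha y_1)-\beta\sin(\alpha y_1)]}{\alpha\sqrt{\alpha^2+\beta^2}\sqrt{\Delta}}.$$ Let $g(t,x):=G_\mu(t,x-3\mu^2t)$, $f(t,x):=F_\mu(t,x-3\mu^2t)$, and $B^{nv}_{\alpha,\beta,\mu}(t,x;x_1,x_2):=\mu+2\sqrt2\,\partial_x[\arctan(g/f)]=\mu+2\sqrt2\frac{fg_x-gf_x}{f^2+g^2}$, a solution of the mKdV equation $u_t+(u_{xx}+u^3)_x=0$ tending to $\mu$ at $\pm\infty$. *)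

From Stdlib Require Import Reals ZArith.
From Coquelicot Require Import Coquelicot.
Open Scope R_scope.

Section Breather.
Variables (alpha beta mu x1 x2 : R).

Definition Dnv : R := alpha ^ 2 + beta ^ 2 - 2 * mu ^ 2.
Definition delta_ : R := alpha ^ 2 - 3 * beta ^ 2.
Definition gamma_ : R := 3 * alpha ^ 2 - beta ^ 2.
Definition y1 (t x : R) : R := x + delta_ * t + x1.
Definition y2 (t x : R) : R := x + gamma_ * t + x2.

Definition Gmu (t x : R) : R :=
  beta * sqrt (alpha ^ 2 + beta ^ 2) / (alpha * sqrt Dnv) * sin (alpha * y1 t x)
  - sqrt 2 * mu * beta * exp (beta * y2 t x) / Dnv.

Definition Fmu (t x : R) : R :=
  cosh (beta * y2 t x)
  - sqrt 2 * mu * beta * (alpha * cos (alpha * y1 t x) - beta * sin (alpha * y1 t x))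
    / (alpha * sqrt (alpha ^ 2 + beta ^ 2) * sqrt Dnv).

Definition gfun (t x : R) : R := Gmu t (x - 3 * mu ^ 2 * t).
Definition ffun (t x : R) : R := Fmu t (x - 3 * mu ^ 2 * t).

Definition Bnv (t x : R) : R :=
  mu + 2 * sqrt 2 *
    (ffun t x * Derive (fun y => gfun t y) x - gfun t x * Derive (fun y => ffun t y) x)
    / (ffun t x ^ 2 + gfun t x ^ 2).

Definition Mnv (t x : R) : R :=
  / 2 * RInt_gen (fun s => Bnv t s ^ 2 - mu ^ 2) (Rbar_locally m_infty) (at_point x).

Definition is_Btilde (Bt : R -> R -> R) : Prop :=
  (forall p : R * R, continuous (fun q : R * R => Bt (fst q) (snd q)) p) /\
  (forall t x : R, ffun t x <> 0 ->
     exists k : Z, Bt t x = mu * x + 2 * sqrt 2 * (atan (gfun t x / ffun t x) + IZR k * PI)).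

End Breather.

From Stdlib Require Import Reals ZArith Lra Psatz Classical.
From Coquelicot Require Import Coquelicot.
Open Scope R_scope.

(* Write f, g for the shifted F_mu, G_mu. Up to a constant factor they are polynomials in
   sin p, cos p, exp q and exp (- q), where the phases p = alpha y1 and q = beta y2 are affine in
   (t, x); hence so are all their partial derivatives, and f^2 + g^2 never vanishes. In terms of
   z = f + i g, B = mu + 2 sqrt2 (arg z)_x and B^2 - mu^2 = 4 (log |z|)_xx, while
   (log |z|)_x -> - |beta| as x -> -oo, so M_nv = 2 |beta| + 2 (log |z|)_x. A continuous branch
   of mu x + 2 sqrt2 arctan (g / f) differs locally by a constant from a smooth determination of
   2 sqrt2 arg z, because f cannot vanish on a t-interval (f_tt + p_t^2 f never vanishes); so
   its t-derivative is 2 sqrt2 (arg z)_t. After these substitutions the identity, multiplied by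
   (f^2 + g^2)^3, becomes a polynomial identity modulo sin^2 + cos^2 = 1 and exp q exp (- q) = 1. *)

(** * Derivatives of the argument and of the log-modulus of f + i g *)

Definition arg_deriv (f f' g g' : R) : R := (f * g' - g * f') / (f ^ 2 + g ^ 2).
Definition logabs_deriv (f f' g g' : R) : R := (f * f' + g * g') / (f ^ 2 + g ^ 2).

Definition arg_deriv2 (f f' f'' g g' g'' : R) : R :=
  ((f * g'' - g * f'') * (f ^ 2 + g ^ 2) - 2 * (f * g' - g * f') * (f * f' + g * g'))
  / (f ^ 2 + g ^ 2) ^ 2.

Definition logabs_deriv2_num (f f1 f2 f12 g g1 g2 g12 : R) : R :=
  (f2 * f1 + f * f12 + g2 * g1 + g * g12) * (f ^ 2 + g ^ 2)
  - 2 * (f * f1 + g * g1) * (f * f2 + g * g2).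

Definition logabs_deriv2 (f f1 f2 f12 g g1 g2 g12 : R) : R :=
  logabs_deriv2_num f f1 f2 f12 g g1 g2 g12 / (f ^ 2 + g ^ 2) ^ 2.

Definition arg_deriv3_num (f fx fxx ft fxt fxxt g gx gxx gt gxt gxxt : R) : R :=
  let W := f ^ 2 + g ^ 2 in
  let N := f * gx - g * fx in
  let N2 := f * gxx - g * fxx in
  let V := f * fx + g * gx in
  let U := f * ft + g * gt in
  let Nt := ft * gx + f * gxt - gt * fx - g * fxt in
  let N2t := ft * gxx + f * gxxt - gt * fxx - g * fxxt in
  let Vt := ft * fx + f * fxt + gt * gx + g * gxt in
  (N2t * W + 2 * N2 * U - 2 * Nt * V - 2 * N * Vt) * W - 4 * (N2 * W - 2 * N * V) * U.

Definition arg_deriv3 (f fx fxx ft fxt fxxt g gx gxx gt gxt gxxt : R) : R :=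
  arg_deriv3_num f fx fxx ft fxt fxxt g gx gxx gt gxt gxxt / (f ^ 2 + g ^ 2) ^ 3.

(* [auto_derive] leaves [Derive (fun y => F y) x], which [is_derive_unique] does not match. *)
Lemma Derive_eq_of_is_derive (f : R -> R) (x l : R) :
  is_derive f x l -> Derive (fun y => f y) x = l.
Proof. exact (is_derive_unique f x l). Qed.

Ltac nonzero_from hW :=
  let h0 := fresh in
  repeat apply Rmult_integral_contrapositive_currified;
  try exact R1_neq_R0; intro h0; apply hW; rewrite <- h0; ring.

Ltac derive_from_hyps hW :=
  auto_derive;
  [ | repeat match goal with
        | h : is_derive ?F ?x ?l |- context [Derive (fun y => ?F y) ?x] =>
            rewrite (Derive_eq_of_is_derive F x l h)
        end;
      field ];
  repeat split; try (eexists; eassumption); nonzero_from hW.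

Lemma is_derive_arg_deriv (F F1 G G1 : R -> R) (x F2 G2 : R) :
  is_derive F x (F1 x) -> is_derive F1 x F2 -> is_derive G x (G1 x) -> is_derive G1 x G2 ->
  F x ^ 2 + G x ^ 2 <> 0 ->
  is_derive (fun y => arg_deriv (F y) (F1 y) (G y) (G1 y)) x
    (arg_deriv2 (F x) (F1 x) F2 (G x) (G1 x) G2).
Proof.
  intros hF hF1 hG hG1 hW. unfold arg_deriv, arg_deriv2. derive_from_hyps hW.
Qed.

Lemma is_derive_logabs_deriv (F F1 G G1 : R -> R) (t F2 F12 G2 G12 : R) :
  is_derive F t F2 -> is_derive F1 t F12 -> is_derive G t G2 -> is_derive G1 t G12 ->
  F t ^ 2 + G t ^ 2 <> 0 ->
  is_derive (fun s => logabs_deriv (F s) (F1 s) (G s) (G1 s)) t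
    (logabs_deriv2 (F t) (F1 t) F2 F12 (G t) (G1 t) G2 G12).
Proof.
  intros hF hF1 hG hG1 hW. unfold logabs_deriv, logabs_deriv2, logabs_deriv2_num.
  derive_from_hyps hW.
Qed.

Lemma is_derive_arg_deriv2 (F Fx Fxx G Gx Gxx : R -> R) (t Ft Fxt Fxxt Gt Gxt Gxxt : R) :
  is_derive F t Ft -> is_derive Fx t Fxt -> is_derive Fxx t Fxxt ->
  is_derive G t Gt -> is_derive Gx t Gxt -> is_derive Gxx t Gxxt ->
  F t ^ 2 + G t ^ 2 <> 0 ->
  is_derive (fun s => arg_deriv2 (F s) (Fx s) (Fxx s) (G s) (Gx s) (Gxx s)) t
    (arg_deriv3 (F t) (Fx t) (Fxx t) Ft Fxt Fxxt (G t) (Gx t) (Gxx t) Gt Gxt Gxxt).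
Proof.
  intros hF hFx hFxx hG hGx hGxx hW. unfold arg_deriv2, arg_deriv3, arg_deriv3_num; cbv zeta.
  derive_from_hyps hW.
Qed.

Definition mass_numerator (m r f fx fxx g gx gxx : R) : R :=
  m * r * (f * gx - g * fx) * (f ^ 2 + g ^ 2) + 2 * (f * gx - g * fx) ^ 2
  - logabs_deriv2_num f fx fx fxx g gx gx gxx.

Lemma mass_identity (m r f fx fxx g gx gxx : R) :
  r ^ 2 = 2 -> f ^ 2 + g ^ 2 <> 0 -> mass_numerator m r f fx fxx g gx gxx = 0 ->
  4 * logabs_deriv2 f fx fx fxx g gx gx gxx = (m + 2 * r * arg_deriv f fx g gx) ^ 2 - m ^ 2.
Proof.
  intros hr hW hnum.
  assert (e : (m + 2 * r * arg_deriv f fx g gx) ^ 2 - m ^ 2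
              - 4 * logabs_deriv2 f fx fx fxx g gx gx gxx
              = 4 * mass_numerator m r f fx fxx g gx gxx / (f ^ 2 + g ^ 2) ^ 2
                + 4 * (r ^ 2 - 2) * (f * gx - g * fx) ^ 2 / (f ^ 2 + g ^ 2) ^ 2).
  { unfold arg_deriv, logabs_deriv2, mass_numerator. field. exact hW. }
  rewrite hnum, hr in e. lra.
Qed.

Definition mkdv_numerator (m r C1 C2 f fx fxx ft fxt fxxt g gx gxx gt gxt gxxt : R) : R :=
  arg_deriv3_num f fx fxx ft fxt fxxt g gx gxx gt gxt gxxt
  + (r * m * (f ^ 2 + g ^ 2) + 4 * (f * gx - g * fx)) * logabs_deriv2_num f fx ft fxt g gx gt gxt
  - (C1 * (f * gt - g * ft) + C2 * (f * gx - g * fx)) * (f ^ 2 + g ^ 2) ^ 2.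

Lemma mkdv_identity (m r C1 C2 f fx fxx ft fxt fxxt g gx gxx gt gxt gxxt : R) :
  r ^ 2 = 2 -> f ^ 2 + g ^ 2 <> 0 ->
  mkdv_numerator m r C1 C2 f fx fxx ft fxt fxxt g gx gxx gt gxt gxxt = 0 ->
  2 * r * arg_deriv3 f fx fxx ft fxt fxxt g gx gxx gt gxt gxxt
  + 2 * (2 * logabs_deriv2 f fx ft fxt g gx gt gxt) * (m + 2 * r * arg_deriv f fx g gx)
  = C1 * (2 * r * arg_deriv f ft g gt) + C2 * (m + 2 * r * arg_deriv f fx g gx - m).
Proof.
  intros hr hW hnum.
  assert (e : 2 * r * arg_deriv3 f fx fxx ft fxt fxxt g gx gxx gt gxt gxxt
              + 2 * (2 * logabs_deriv2 f fx ft fxt g gx gt gxt) * (m + 2 * r * arg_deriv f fx g gx)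
              - (C1 * (2 * r * arg_deriv f ft g gt) + C2 * (m + 2 * r * arg_deriv f fx g gx - m))
              = 2 * r * mkdv_numerator m r C1 C2 f fx fxx ft fxt fxxt g gx gxx gt gxt gxxt
                  / (f ^ 2 + g ^ 2) ^ 3
                + 2 * (2 - r ^ 2) * m * logabs_deriv2 f fx ft fxt g gx gt gxt).
  { unfold arg_deriv, arg_deriv3, logabs_deriv2, mkdv_numerator. field. exact hW. }
  rewrite hnum, hr in e. lra.
Qed.

(** * Continuous branches of the argument *)

Definition everywhere_dense (P : R -> Prop) : Prop :=
  forall s (U : R -> Prop), locally s U -> exists s', U s' /\ P s'.

Lemma IZR_eq_of_close (k1 k2 : Z) : Rabs (IZR k1 - IZR k2) < 1 -> k1 = k2.
Proof.
  intro h. apply Rabs_def2 in h. rewrite <- minus_IZR in h.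
  apply Zminus_eq, one_IZR_lt1. lra.
Qed.

Lemma locally_neq_0 (F : R -> R) (t : R) :
  continuous F t -> F t <> 0 -> locally t (fun s => F s <> 0).
Proof.
  intros hc hF. assert (he : 0 < Rabs (F t)) by (apply Rabs_pos_lt; exact hF).
  apply (filter_imp (fun s => ball (F t) (mkposreal _ he) (F s))).
  - intros s hs hs0. change (Rabs (F s - F t) < Rabs (F t)) in hs.
    rewrite hs0, Rminus_0_l, Rabs_Ropp in hs. lra.
  - exact (proj1 (filterlim_locally _ _) hc _).
Qed.

Lemma continuous_eq_of_dense (D : R -> R) (s v : R) :
  continuous D s -> (forall U, locally s U -> exists s', U s' /\ D s' = v) -> D s = v.
Proof.
  intros hc hdense. destruct (Req_dec (D s) v) as [hv | hv]; [exact hv | exfalso].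
  assert (he : 0 < Rabs (D s - v)) by (apply Rabs_pos_lt; lra).
  destruct (hdense _ (proj1 (filterlim_locally _ _) hc (mkposreal _ he))) as [s' [hs' hDs']].
  change (Rabs (D s' - D s) < Rabs (D s - v)) in hs'.
  rewrite hDs', Rabs_minus_sym in hs'. lra.
Qed.

Lemma is_derive_locally_zero (F : R -> R) (y l : R) :
  locally y (fun z => F z = 0) -> is_derive F y l -> l = 0.
Proof.
  intros hz hF. apply (is_derive_unique F y) in hF. rewrite <- hF.
  apply is_derive_unique, (is_derive_ext_loc (fun _ => 0)).
  - apply (filter_imp _ _ (fun z hz => eq_sym hz) hz).
  - apply (@is_derive_const R_AbsRing R_NormedModule).
Qed.

(* Otherwise [F], hence [F'] and [F''], would vanish near some zero of [F]. *)
Lemma everywhere_dense_neq_0 (F F1 F2 : R -> R) :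
  (forall s, is_derive F s (F1 s)) -> (forall s, is_derive F1 s (F2 s)) ->
  (forall s, F s = 0 -> F2 s <> 0) -> everywhere_dense (fun s => F s <> 0).
Proof.
  intros hF hF1 hF2 s U hU. apply NNPP. intro hnone.
  assert (hz : locally s (fun y => F y = 0)).
  { apply (filter_imp U); [|exact hU].
    intros y hy. apply NNPP. intro hFy. apply hnone. exists y. tauto. }
  assert (hz1 : locally s (fun y => F1 y = 0)).
  { apply (filter_imp _ _ (fun y hy => is_derive_locally_zero F y _ hy (hF y))).
    exact (locally_locally _ _ hz). }
  exact (hF2 s (locally_singleton _ _ hz) (is_derive_locally_zero F1 s _ hz1 (hF1 s))).
Qed.

Lemma locally_constant_of_lattice (D : R -> R) (P : R -> Prop) (c t : R) :
  0 < c -> everywhere_dense P ->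
  locally t (fun s => continuous D s /\ (P s -> exists k : Z, D s = c * IZR k)) ->
  exists v, locally t (fun s => D s = v).
Proof.
  intros hc hP hD. assert (hc2 : 0 < c / 2) by lra.
  set (V := fun s => (continuous D s /\ (P s -> exists k : Z, D s = c * IZR k))
                     /\ ball (D t) (mkposreal _ hc2) (D s)).
  assert (hV : locally t V).
  { apply filter_and; [exact hD|].
    apply (proj1 (filterlim_locally _ _)), (proj1 (locally_singleton _ _ hD)). }
  destruct (hP t V hV) as [t0 [[[_ hk0] hb0] hPt0]].
  destruct (hk0 hPt0) as [k0 hDt0].
  assert (hlat : forall s, V s -> P s -> D s = D t0).
  { intros s [[_ hk] hb] hPs. destruct (hk hPs) as [k hDs].
    rewrite hDs, hDt0. do 2 f_equal. apply IZR_eq_of_close.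
    apply (Rmult_lt_reg_l c); [exact hc|]. rewrite Rmult_1_r, <- (Rabs_pos_eq c) at 1 by lra.
    rewrite <- Rabs_mult, Rmult_minus_distr_l, <- hDs, <- hDt0.
    change (Rabs (D s - D t) < c / 2) in hb. change (Rabs (D t0 - D t) < c / 2) in hb0.
    replace (D s - D t0) with ((D s - D t) - (D t0 - D t)) by ring.
    eapply Rle_lt_trans; [apply Rabs_triang|]. rewrite Rabs_Ropp. lra. }
  exists (D t0).
  apply (filter_imp (fun s => locally s V)); [|exact (locally_locally _ _ hV)].
  intros s hs. apply continuous_eq_of_dense; [exact (proj1 (proj1 (locally_singleton _ _ hs)))|].
  intros U hU. destruct (hP s _ (filter_and _ _ hU hs)) as [s' [[hU' hV'] hP']].
  exists s'. split; [exact hU'|]. exact (hlat s' hV' hP').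
Qed.

Lemma is_derive_of_lattice_shift (BT Q : R -> R) (P : R -> Prop) (c t l : R) :
  0 < c -> (forall s, continuous BT s) -> everywhere_dense P ->
  locally t (fun s => ex_derive Q s /\ (P s -> exists k : Z, BT s = Q s + c * IZR k)) ->
  is_derive Q t l -> is_derive BT t l.
Proof.
  intros hc hBT hP hQ hQt.
  destruct (locally_constant_of_lattice (fun s => BT s - Q s) P c t hc hP) as [v hv].
  { refine (filter_imp _ _ _ hQ). intros s [hdQ hk]. split.
    - apply (continuous_minus BT Q s (hBT s) (ex_derive_continuous Q s hdQ)).
    - intro hPs. destruct (hk hPs) as [k hBk]. exists k. lra. }
  apply (is_derive_ext_loc (fun s => Q s + v)).
  - refine (filter_imp _ _ _ hv). intros s hs. simpl in hs. lra.
  - rewrite <- (Rplus_0_r l). apply (is_derive_plus Q (fun _ => v)); [exact hQt|].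
    apply (@is_derive_const R_AbsRing R_NormedModule).
Qed.

Lemma is_derive_atan_ratio (F G : R -> R) (t F1 G1 : R) :
  is_derive F t F1 -> is_derive G t G1 -> F t <> 0 ->
  is_derive (fun s => atan (G s / F s)) t (arg_deriv (F t) F1 (G t) G1).
Proof.
  intros hF hG hF0.
  pose proof (is_derive_comp atan (fun s => G s / F s) t _ _
                (is_derive_atan (G t / F t)) (is_derive_div G F t G1 F1 hG hF hF0)) as h.
  replace (arg_deriv (F t) F1 (G t) G1) with
    (scal ((G1 * F t - G t * F1) / F t ^ 2) (/ (1 + (G t / F t)²))); [exact h|].
  unfold arg_deriv, scal, Rsqr; simpl; unfold mult; simpl. field.
  split; [|exact hF0]. intro hW. assert (0 < F t * F t) by (apply Rsqr_pos_lt; exact hF0).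
  pose proof (Rle_0_sqr (G t)). unfold Rsqr in *. lra.
Qed.

Lemma atan_div_swap (f g : R) : f <> 0 -> g <> 0 ->
  exists j : Z, atan (g / f) = PI / 2 - atan (f / g) + IZR j * PI.
Proof.
  intros hf hg. destruct (Rlt_or_le 0 (f / g)) as [hp | hn].
  - exists 0%Z. replace (g / f) with (/ (f / g)) by (field; auto).
    rewrite atan_inv by exact hp. simpl. ring.
  - assert (hn' : 0 < - (f / g)).
    { assert (f / g <> 0).
      { unfold Rdiv.
        apply Rmult_integral_contrapositive_currified; [|apply Rinv_neq_0_compat]; assumption. }
      lra. }
    exists (-1)%Z. replace (g / f) with (- / (- (f / g))) by (field; auto).
    rewrite atan_opp, atan_inv, atan_opp by exact hn'. simpl. field.
Qed.

Lemma arg_deriv_swap (f f' g g' : R) : arg_deriv g g' f f' = - arg_deriv f f' g g'.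
Proof. unfold arg_deriv. rewrite (Rplus_comm (g ^ 2)). unfold Rdiv. ring. Qed.

Lemma is_derive_affine (h : R -> R) (a0 k s dh : R) :
  is_derive h s dh -> is_derive (fun s => a0 + k * h s) s (k * dh).
Proof.
  intro hh. rewrite <- (Rplus_0_l (k * dh)).
  apply (is_derive_plus (fun _ => a0) (fun s => k * h s)).
  - apply (@is_derive_const R_AbsRing R_NormedModule).
  - apply is_derive_scal, hh.
Qed.

(* Near a zero of [F], [atan (G / F)] jumps by [PI]; the smooth branch there is
   [PI/2 - atan (F / G)]. *)
Lemma is_derive_continuous_arg (F F1 F2 G G1 BT : R -> R) (C0 r t : R) :
  0 < r ->
  (forall s, is_derive F s (F1 s)) -> (forall s, is_derive F1 s (F2 s)) ->
  (forall s, is_derive G s (G1 s)) -> (forall s, F s = 0 -> F2 s <> 0) ->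
  0 < F t ^ 2 + G t ^ 2 -> (forall s, continuous BT s) ->
  (forall s, F s <> 0 -> exists k : Z, BT s = C0 + r * (atan (G s / F s) + IZR k * PI)) ->
  is_derive BT t (r * arg_deriv (F t) (F1 t) (G t) (G1 t)).
Proof.
  intros hr hF hF1 hG hF2 hW hBTc hBT.
  assert (hdense := everywhere_dense_neq_0 F F1 F2 hF hF1 hF2).
  assert (hrPI : 0 < r * PI) by (apply Rmult_lt_0_compat; [exact hr | exact PI_RGT_0]).
  assert (hFc : forall s, continuous F s)
    by (intro s; exact (ex_derive_continuous F s (ex_intro _ _ (hF s)))).
  assert (hGc : forall s, continuous G s)
    by (intro s; exact (ex_derive_continuous G s (ex_intro _ _ (hG s)))).
  destruct (Req_dec (F t) 0) as [hFt | hFt].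
  - assert (hGt : G t <> 0) by (intro hGt; rewrite hFt, hGt in hW; lra).
    set (Q := fun s => (C0 + r * (PI / 2)) + - r * atan (F s / G s)).
    assert (hQ : forall s, G s <> 0 -> is_derive Q s (r * arg_deriv (F s) (F1 s) (G s) (G1 s))).
    { intros s hGs. replace (r * arg_deriv (F s) (F1 s) (G s) (G1 s))
        with (- r * arg_deriv (G s) (G1 s) (F s) (F1 s)) by (rewrite arg_deriv_swap; ring).
      apply is_derive_affine, is_derive_atan_ratio; auto. }
    apply (is_derive_of_lattice_shift BT Q (fun s => F s <> 0) (r * PI) t); auto.
    refine (filter_imp _ _ _ (locally_neq_0 G t (hGc t) hGt)). intros s hGs. split.
    + exact (ex_intro _ _ (hQ s hGs)).
    + intro hFs. destruct (hBT s hFs) as [k hk]. destruct (atan_div_swap _ _ hFs hGs) as [j hj].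
      exists (k + j)%Z. rewrite hk, hj, plus_IZR. unfold Q. ring.
  - set (Q := fun s => C0 + r * atan (G s / F s)).
    assert (hQ : forall s, F s <> 0 -> is_derive Q s (r * arg_deriv (F s) (F1 s) (G s) (G1 s))).
    { intros s hFs. apply is_derive_affine, is_derive_atan_ratio; auto. }
    apply (is_derive_of_lattice_shift BT Q (fun s => F s <> 0) (r * PI) t); auto.
    refine (filter_imp _ _ _ (locally_neq_0 F t (hFc t) hFt)). intros s hFs. split.
    + exact (ex_intro _ _ (hQ s hFs)).
    + intros _. destruct (hBT s hFs) as [k hk]. exists k. rewrite hk. unfold Q. ring.
Qed.

Lemma is_lim_mult_bounded (e h : R -> R) (x : Rbar) (M : R) :
  is_lim e x 0 -> (forall y, Rabs (h y) <= M) -> is_lim (fun y => e y * h y) x 0.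
Proof.
  intros he hh.
  assert (hbound : is_lim (fun y => M * Rabs (e y)) x 0).
  { replace (Finite 0) with (Rbar_mult M (Rbar_abs 0)) by (simpl; f_equal; rewrite Rabs_R0; ring).
    apply is_lim_scal_l, is_lim_Rabs, he. }
  apply (is_lim_le_le_loc (fun y => - (M * Rabs (e y))) (fun y => M * Rabs (e y))).
  - apply filter_forall. intro y.
    rewrite <- (Rabs_pos_eq M) by (apply (Rle_trans _ _ _ (Rabs_pos (h y)) (hh y))).
    assert (hy : Rabs (e y * h y) <= Rabs M * Rabs (e y)).
    { rewrite Rabs_mult, Rmult_comm. apply Rmult_le_compat_r; [apply Rabs_pos|].
      apply (Rle_trans _ _ _ (hh y)), Rle_abs. }
    apply Rabs_le_between. exact hy.
  - replace (Finite 0) with (Rbar_opp 0) by (simpl; f_equal; ring). apply is_lim_opp, hbound.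
  - exact hbound.
Qed.

Lemma is_lim_perturbation (e h : R -> R) (x : Rbar) (L c1 c2 M : R) :
  is_lim e x 0 -> (forall y, Rabs (h y) <= M) ->
  is_lim (fun y => L + c1 * (e y * h y) + c2 * (e y * e y)) x L.
Proof.
  intros he hh.
  assert (h1 : is_lim (fun y => c1 * (e y * h y)) x (Rbar_mult c1 0))
    by apply is_lim_scal_l, (is_lim_mult_bounded e h x M he hh).
  assert (h2 : is_lim (fun y => c2 * (e y * e y)) x (Rbar_mult c2 (Rbar_mult 0 0)))
    by (apply is_lim_scal_l, is_lim_mult; [exact he | exact he | exact I]).
  simpl in h1, h2. rewrite Rmult_0_r in h1. rewrite !Rmult_0_r in h2.
  apply (is_lim_plus _ _ x (L + 0) 0); [apply (is_lim_plus _ _ x L 0)| |];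
    auto using is_lim_const; unfold is_Rbar_plus; simpl; rewrite ?Rplus_0_r; reflexivity.
Qed.

Lemma logabs_deriv_scale (l f f' g g' : R) :
  l <> 0 -> logabs_deriv (l * f) (l * f') (l * g) (l * g') = logabs_deriv f f' g g'.
Proof.
  intro hl. unfold logabs_deriv, Rdiv.
  replace ((l * f) ^ 2 + (l * g) ^ 2) with (l ^ 2 * (f ^ 2 + g ^ 2)) by ring.
  rewrite Rinv_mult.
  replace ((l * f * (l * f') + l * g * (l * g')) * (/ l ^ 2 * / (f ^ 2 + g ^ 2)))
    with ((l ^ 2 * / l ^ 2) * ((f * f' + g * g') * / (f ^ 2 + g ^ 2))) by ring.
  rewrite Rinv_r, Rmult_1_l by (apply pow_nonzero, hl). reflexivity.
Qed.

Lemma is_lim_logabs_deriv (l f f' g g' : R -> R) (x : Rbar) (F0 F1 G0 G1 : R) :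
  (forall y, l y <> 0) ->
  is_lim (fun y => l y * f y) x F0 -> is_lim (fun y => l y * f' y) x F1 ->
  is_lim (fun y => l y * g y) x G0 -> is_lim (fun y => l y * g' y) x G1 ->
  F0 ^ 2 + G0 ^ 2 <> 0 ->
  is_lim (fun y => logabs_deriv (f y) (f' y) (g y) (g' y)) x (logabs_deriv F0 F1 G0 G1).
Proof.
  intros hl hf hf' hg hg' hW.
  replace (logabs_deriv F0 F1 G0 G1) with ((F0 * F1 + G0 * G1) / (F0 * F0 + G0 * G0))
    by (unfold logabs_deriv; f_equal; ring).
  apply (is_lim_ext (fun y => (l y * f y * (l y * f' y) + l y * g y * (l y * g' y))
                              / (l y * f y * (l y * f y) + l y * g y * (l y * g y)))).
  { intro y. rewrite <- (logabs_deriv_scale (l y)) by apply hl.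
    unfold logabs_deriv. f_equal. ring. }
  apply (is_lim_div _ _ x (F0 * F1 + G0 * G1) (F0 * F0 + G0 * G0)).
  - exact (is_lim_plus' _ _ _ _ _ (is_lim_mult _ _ _ _ _ hf hf' I)
                                   (is_lim_mult _ _ _ _ _ hg hg' I)).
  - exact (is_lim_plus' _ _ _ _ _ (is_lim_mult _ _ _ _ _ hf hf I)
                                   (is_lim_mult _ _ _ _ _ hg hg I)).
  - intro h. apply hW. injection h. intro h'. rewrite <- h'. ring.
  - exact I.
Qed.

Lemma is_lim_exp_affine (k q0 : R) : 0 < k -> is_lim (fun y => exp (k * y + q0)) m_infty 0.
Proof.
  intro hk. apply (is_lim_comp exp (fun y => k * y + q0) m_infty 0 m_infty).
  - exact is_lim_exp_m.
  - intros P [M hM]. exists ((M - q0) / k). intros y hy. apply hM.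
    apply (Rmult_lt_compat_l k) in hy; [|exact hk].
    replace (k * ((M - q0) / k)) with (M - q0) in hy by (field; lra). lra.
  - apply filter_forall. discriminate.
Qed.

Lemma Rabs_trig_comb_le (u v p : R) : Rabs (u * sin p + v * cos p) <= Rabs u + Rabs v.
Proof.
  eapply Rle_trans; [apply Rabs_triang|]. rewrite !Rabs_mult.
  assert (Rabs (sin p) <= 1) by (apply Rabs_le, SIN_bound).
  assert (Rabs (cos p) <= 1) by (apply Rabs_le, COS_bound).
  pose proof (Rabs_pos u). pose proof (Rabs_pos v). nra.
Qed.

(** * Polynomials in the phases *)

Section PhasePolynomials.
Variables (a b A B C D : R).

(* Polynomials in [s = sin p], [c = cos p], [E = exp q], [Ei = exp (- q)]; the weights
   [al] and [be] accumulate the rates of [q] and [p] along the derivatives taken. *)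
Definition f_even (al be s c E Ei : R) : R := A * al * (E + Ei) - B * be * (a * c - b * s).
Definition f_odd (al be s c E Ei : R) : R := A * al * (E - Ei) + B * be * (a * s + b * c).
Definition g_sin (al be s c E Ei : R) : R := C * be * s - D * al * E.
Definition g_cos (al be s c E Ei : R) : R := C * be * c - D * al * E.

End PhasePolynomials.

Definition phase_poly : Type := R -> R -> R -> R -> R.

Definition at_phases (P : phase_poly) (p q : R) : R :=
  P (sin p) (cos p) (exp q) (exp (- q)).

Definition phase_derivative (P Q : phase_poly) (w k : R) : Prop :=
  forall p0 q0 y, is_derive (fun y => at_phases P (w * y + p0) (k * y + q0)) y
                            (at_phases Q (w * y + p0) (k * y + q0)).

Section PhaseDerivatives.
Variables (a b A B C D al be al' be' w k : R).
Hypothesis (Hal : al' = al * k).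

Lemma phase_derivative_f_even : be' = be * w ->
  phase_derivative (f_even a b A B al be) (f_odd a b A B al' be') w k.
Proof.
  intros Hbe p0 q0 y. unfold at_phases, f_even, f_odd. subst.
  auto_derive; [exact I | ring].
Qed.

Lemma phase_derivative_f_odd : be' = - (be * w) ->
  phase_derivative (f_odd a b A B al be) (f_even a b A B al' be') w k.
Proof.
  intros Hbe p0 q0 y. unfold at_phases, f_even, f_odd. subst.
  auto_derive; [exact I | ring].
Qed.

Lemma phase_derivative_g_sin : be' = be * w ->
  phase_derivative (g_sin C D al be) (g_cos C D al' be') w k.
Proof.
  intros Hbe p0 q0 y. unfold at_phases, g_sin, g_cos. subst.
  auto_derive; [exact I | ring].
Qed.

Lemma phase_derivative_g_cos : be' = - (be * w) ->
  phase_derivative (g_cos C D al be) (g_sin C D al' be') w k.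
Proof.
  intros Hbe p0 q0 y. unfold at_phases, g_sin, g_cos. subst.
  auto_derive; [exact I | ring].
Qed.

End PhaseDerivatives.

Lemma sin_sq (p : R) : sin p ^ 2 = 1 - cos p ^ 2.
Proof. pose proof (sin2 p) as h. unfold Rsqr in h. simpl. lra. Qed.

Lemma exp_mul_exp_opp (q : R) : exp q * exp (- q) = 1.
Proof. rewrite exp_Ropp. apply Rinv_r, exp_neq_0. Qed.

(** * The breather *)

Section Breather.
Variables (a b m x1 x2 : R).
Hypotheses (Ha : a <> 0) (Hb : b <> 0) (HD : Dnv a b m > 0).

Definition Sab : R := sqrt (a ^ 2 + b ^ 2).
Definition dnv : R := sqrt (Dnv a b m).
Definition rt2 : R := sqrt 2.
Definition Af : R := a * Sab * dnv ^ 2.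
Definition Bf : R := 2 * b * m * rt2 * dnv.
Definition Cg : R := 2 * b * Sab ^ 2 * dnv.
Definition Dg : R := 2 * a * b * m * rt2 * Sab.
Definition kappa : R := 2 * Af.

Lemma Sab_pos : 0 < Sab.
Proof. apply sqrt_lt_R0. pose proof (pow2_gt_0 a Ha). pose proof (pow2_ge_0 b). lra. Qed.

Lemma dnv_pos : 0 < dnv.
Proof. apply sqrt_lt_R0. exact HD. Qed.

Lemma Sab_sq : Sab ^ 2 = a ^ 2 + b ^ 2.
Proof. apply pow2_sqrt. pose proof (pow2_ge_0 a). pose proof (pow2_ge_0 b). lra. Qed.

Lemma dnv_sq : dnv ^ 2 = Dnv a b m.
Proof. apply pow2_sqrt. lra. Qed.

Lemma rt2_sq : rt2 ^ 2 = 2.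
Proof. apply pow2_sqrt. lra. Qed.

Lemma Af_neq_0 : Af <> 0.
Proof.
  unfold Af. pose proof Sab_pos. pose proof dnv_pos.
  repeat apply Rmult_integral_contrapositive_currified; try assumption; lra.
Qed.

Lemma kappa_neq_0 : kappa <> 0.
Proof. unfold kappa. pose proof Af_neq_0. lra. Qed.

Definition speed_p : R := a * (delta_ a b - 3 * m ^ 2).
Definition speed_q : R := b * (gamma_ a b - 3 * m ^ 2).
Definition phase_p (t x : R) : R := a * y1 a b x1 t (x - 3 * m ^ 2 * t).
Definition phase_q (t x : R) : R := b * y2 a b x2 t (x - 3 * m ^ 2 * t).

Lemma phase_p_x (t x : R) : phase_p t x = a * x + (speed_p * t + a * x1).
Proof. unfold phase_p, speed_p, y1. ring. Qed.
Lemma phase_q_x (t x : R) : phase_q t x = b * x + (speed_q * t + b * x2).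
Proof. unfold phase_q, speed_q, y2. ring. Qed.
Lemma phase_p_t (t x : R) : phase_p t x = speed_p * t + (a * x + a * x1).
Proof. unfold phase_p, speed_p, y1. ring. Qed.
Lemma phase_q_t (t x : R) : phase_q t x = speed_q * t + (b * x + b * x2).
Proof. unfold phase_q, speed_q, y2. ring. Qed.

Definition ev (P : phase_poly) (t x : R) : R := at_phases P (phase_p t x) (phase_q t x).

Lemma is_derive_ev_x (P Q : phase_poly) :
  phase_derivative P Q a b -> forall t x, is_derive (fun y => ev P t y) x (ev Q t x).
Proof.
  intros hPQ t x. unfold ev.
  apply (is_derive_ext
           (fun y => at_phases P (a * y + (speed_p * t + a * x1))
                                 (b * y + (speed_q * t + b * x2)))).
  - intro y. rewrite phase_p_x, phase_q_x. reflexivity.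
  - rewrite phase_p_x, phase_q_x. apply hPQ.
Qed.

Lemma is_derive_ev_t (P Q : phase_poly) :
  phase_derivative P Q speed_p speed_q -> forall t x, is_derive (fun s => ev P s x) t (ev Q t x).
Proof.
  intros hPQ t x. unfold ev.
  apply (is_derive_ext
           (fun s => at_phases P (speed_p * s + (a * x + a * x1))
                                 (speed_q * s + (b * x + b * x2)))).
  - intro s. rewrite phase_p_t, phase_q_t. reflexivity.
  - rewrite phase_p_t, phase_q_t. apply hPQ.
Qed.

(* [Pf / kappa] and [Pg / kappa] are [ffun] and [gfun]; the suffixes name partial derivatives. *)
Definition Pf : phase_poly := f_even a b Af Bf 1 1.
Definition Pf_x : phase_poly := f_odd a b Af Bf b a.
Definition Pf_xx : phase_poly := f_even a b Af Bf (b * b) (- (a * a)).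
Definition Pf_t : phase_poly := f_odd a b Af Bf speed_q speed_p.
Definition Pf_xt : phase_poly := f_even a b Af Bf (b * speed_q) (- (a * speed_p)).
Definition Pf_xxt : phase_poly := f_odd a b Af Bf (b * b * speed_q) (- (a * a * speed_p)).
Definition Pf_tt : phase_poly := f_even a b Af Bf (speed_q * speed_q) (- (speed_p * speed_p)).
Definition Pg : phase_poly := g_sin Cg Dg 1 1.
Definition Pg_x : phase_poly := g_cos Cg Dg b a.
Definition Pg_xx : phase_poly := g_sin Cg Dg (b * b) (- (a * a)).
Definition Pg_t : phase_poly := g_cos Cg Dg speed_q speed_p.
Definition Pg_xt : phase_poly := g_sin Cg Dg (b * speed_q) (- (a * speed_p)).
Definition Pg_xxt : phase_poly := g_cos Cg Dg (b * b * speed_q) (- (a * a * speed_p)).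

Lemma is_derive_Pf_x : forall t x, is_derive (fun y => ev Pf t y) x (ev Pf_x t x).
Proof. apply is_derive_ev_x, phase_derivative_f_even; ring. Qed.
Lemma is_derive_Pf_xx : forall t x, is_derive (fun y => ev Pf_x t y) x (ev Pf_xx t x).
Proof. apply is_derive_ev_x, phase_derivative_f_odd; ring. Qed.
Lemma is_derive_Pg_x : forall t x, is_derive (fun y => ev Pg t y) x (ev Pg_x t x).
Proof. apply is_derive_ev_x, phase_derivative_g_sin; ring. Qed.
Lemma is_derive_Pg_xx : forall t x, is_derive (fun y => ev Pg_x t y) x (ev Pg_xx t x).
Proof. apply is_derive_ev_x, phase_derivative_g_cos; ring. Qed.
Lemma is_derive_Pf_t : forall t x, is_derive (fun s => ev Pf s x) t (ev Pf_t t x).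
Proof. apply is_derive_ev_t, phase_derivative_f_even; ring. Qed.
Lemma is_derive_Pf_xt : forall t x, is_derive (fun s => ev Pf_x s x) t (ev Pf_xt t x).
Proof. apply is_derive_ev_t, phase_derivative_f_odd; ring. Qed.
Lemma is_derive_Pf_xxt : forall t x, is_derive (fun s => ev Pf_xx s x) t (ev Pf_xxt t x).
Proof. apply is_derive_ev_t, phase_derivative_f_even; ring. Qed.
Lemma is_derive_Pf_tt : forall t x, is_derive (fun s => ev Pf_t s x) t (ev Pf_tt t x).
Proof. apply is_derive_ev_t, phase_derivative_f_odd; ring. Qed.
Lemma is_derive_Pg_t : forall t x, is_derive (fun s => ev Pg s x) t (ev Pg_t t x).
Proof. apply is_derive_ev_t, phase_derivative_g_sin; ring. Qed.
Lemma is_derive_Pg_xt : forall t x, is_derive (fun s => ev Pg_x s x) t (ev Pg_xt t x).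
Proof. apply is_derive_ev_t, phase_derivative_g_cos; ring. Qed.
Lemma is_derive_Pg_xxt : forall t x, is_derive (fun s => ev Pg_xx s x) t (ev Pg_xxt t x).
Proof. apply is_derive_ev_t, phase_derivative_g_sin; ring. Qed.

Lemma mass_numerator_vanishes (s c E Ei : R) :
  s ^ 2 = 1 - c ^ 2 -> E * Ei = 1 ->
  mass_numerator m rt2 (Pf s c E Ei) (Pf_x s c E Ei) (Pf_xx s c E Ei)
    (Pg s c E Ei) (Pg_x s c E Ei) (Pg_xx s c E Ei) = 0.
Proof.
  intros hs hE. pose proof Sab_sq as hS. pose proof dnv_sq as hd. pose proof rt2_sq as hr.
  unfold Dnv in hd.
  unfold mass_numerator, logabs_deriv2_num, Pf, Pf_x, Pf_xx, Pg, Pg_x, Pg_xx,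
    f_even, f_odd, g_sin, g_cos, Af, Bf, Cg, Dg.
  cbv zeta. ring [hr hS hd hs hE].
Qed.

Lemma mkdv_numerator_vanishes (s c E Ei : R) :
  s ^ 2 = 1 - c ^ 2 -> E * Ei = 1 ->
  mkdv_numerator m rt2 (2 * (b ^ 2 - a ^ 2) + 5 * m ^ 2)
    ((a ^ 2 + b ^ 2) ^ 2 + 6 * m ^ 2 * (b ^ 2 - a ^ 2 + 3 / 2 * m ^ 2))
    (Pf s c E Ei) (Pf_x s c E Ei) (Pf_xx s c E Ei)
    (Pf_t s c E Ei) (Pf_xt s c E Ei) (Pf_xxt s c E Ei)
    (Pg s c E Ei) (Pg_x s c E Ei) (Pg_xx s c E Ei)
    (Pg_t s c E Ei) (Pg_xt s c E Ei) (Pg_xxt s c E Ei)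
  = 0.
Proof.
  intros hs hE. pose proof Sab_sq as hS. pose proof dnv_sq as hd. pose proof rt2_sq as hr.
  unfold Dnv in hd.
  replace (6 * m ^ 2 * (b ^ 2 - a ^ 2 + 3 / 2 * m ^ 2))
    with (6 * m ^ 2 * (b ^ 2 - a ^ 2) + 9 * m ^ 4) by field.
  unfold mkdv_numerator, arg_deriv3_num, logabs_deriv2_num,
    Pf, Pf_x, Pf_xx, Pf_t, Pf_xt, Pf_xxt, Pg, Pg_x, Pg_xx, Pg_t, Pg_xt, Pg_xxt,
    f_even, f_odd, g_sin, g_cos, Af, Bf, Cg, Dg, speed_p, speed_q, delta_, gamma_.
  cbv zeta. ring [hr hS hd hs hE].
Qed.

(* If [Pf] and [Pg] both vanished, [X + Y] below would equal [2 sqrt2 mu beta c Sab dnv],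
   whose square [8 K c^2] is too small for the AM-GM bound [(X + Y)^2 >= 4 X Y = 16 K (E^2 + 1)]. *)
Lemma Pf_Pg_no_common_zero (s c E Ei : R) :
  s ^ 2 = 1 - c ^ 2 -> E * Ei = 1 -> 0 < E -> Pf s c E Ei = 0 -> Pg s c E Ei = 0 -> False.
Proof.
  intros hs hE hEpos hf hg.
  pose proof Sab_pos as hS. pose proof dnv_pos as hd. pose proof rt2_sq as hr.
  set (X := Sab ^ 2 * dnv ^ 2 * (E + Ei)). set (Y := 4 * m ^ 2 * b ^ 2 * E).
  set (K := m ^ 2 * b ^ 2 * Sab ^ 2 * dnv ^ 2).
  assert (hcomb : Sab * (a * (X + Y - 2 * m * rt2 * b * c * Sab * dnv))
                  = Sab ^ 2 * Pf s c E Ei - m * rt2 * b * Pg s c E Ei).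
  { unfold X, Y, Pf, Pg, f_even, g_sin, Af, Bf, Cg, Dg. ring [hr]. }
  rewrite hf, hg in hcomb.
  assert (hXY : X + Y = 2 * m * rt2 * b * c * Sab * dnv).
  { assert (h0 : Sab * a * (X + Y - 2 * m * rt2 * b * c * Sab * dnv) = 0) by lra.
    apply Rmult_integral in h0. destruct h0 as [h0 | h0]; [|lra].
    apply Rmult_integral in h0. destruct h0; [lra | contradiction]. }
  assert (hsq : (X + Y) ^ 2 = 8 * K * c ^ 2) by (rewrite hXY; unfold K; ring [hr]).
  assert (hXY4 : 4 * X * Y = 16 * K * (E ^ 2 + 1)) by (unfold X, Y, K; ring [hE]).
  assert (hamgm : 4 * X * Y <= (X + Y) ^ 2) by (pose proof (pow2_ge_0 (X - Y)); nra).
  assert (hK : 0 <= K) by (unfold K; pose proof (pow2_ge_0 (m * b * Sab * dnv)); nra).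
  assert (hc : c ^ 2 <= 1) by (pose proof (pow2_ge_0 s); lra).
  assert (hX : 0 < X).
  { assert (0 < Ei) by nra. unfold X. pose proof (pow2_gt_0 Sab (Rgt_not_eq _ _ hS)).
    pose proof (pow2_gt_0 dnv (Rgt_not_eq _ _ hd)). apply Rmult_lt_0_compat; [nra | lra]. }
  assert (hY : 0 <= Y) by (unfold Y; pose proof (pow2_ge_0 (m * b)); nra).
  nra.
Qed.

Lemma Pf_Pg_norm_pos (t x : R) : 0 < ev Pf t x ^ 2 + ev Pg t x ^ 2.
Proof.
  destruct (Req_dec (ev Pf t x) 0) as [hf | hf].
  - destruct (Req_dec (ev Pg t x) 0) as [hg | hg].
    + exfalso.
      exact (Pf_Pg_no_common_zero _ _ _ _ (sin_sq _) (exp_mul_exp_opp _) (exp_pos _) hf hg).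
    + pose proof (pow2_gt_0 _ hg). pose proof (pow2_ge_0 (ev Pf t x)). lra.
  - pose proof (pow2_gt_0 _ hf). pose proof (pow2_ge_0 (ev Pg t x)). lra.
Qed.

Lemma Pf_Pg_norm_neq_0 (t x : R) : ev Pf t x ^ 2 + ev Pg t x ^ 2 <> 0.
Proof. apply Rgt_not_eq, Pf_Pg_norm_pos. Qed.

Lemma speed_sq_pos : 0 < speed_p ^ 2 + speed_q ^ 2.
Proof.
  destruct (Req_dec speed_p 0) as [hp | hp].
  - assert (hq : speed_q <> 0).
    { unfold speed_p, speed_q, delta_, gamma_ in *. intro hq.
      apply Rmult_integral in hp, hq. destruct hp as [hp | hp]; [contradiction|].
      destruct hq as [hq | hq]; [contradiction|].
      pose proof (pow2_gt_0 b Hb). pose proof (pow2_ge_0 m). lra. }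
    pose proof (pow2_gt_0 _ hq). pose proof (pow2_ge_0 speed_p). lra.
  - pose proof (pow2_gt_0 _ hp). pose proof (pow2_ge_0 speed_q). lra.
Qed.

Lemma Pf_tt_neq_0_at_zero (t x : R) : ev Pf t x = 0 -> ev Pf_tt t x <> 0.
Proof.
  unfold ev, at_phases. set (s := sin (phase_p t x)). set (c := cos (phase_p t x)).
  set (E := exp (phase_q t x)). set (Ei := exp (- phase_q t x)). intros hf htt.
  assert (hsum : Pf_tt s c E Ei + speed_p ^ 2 * Pf s c E Ei
                 = Af * (speed_p ^ 2 + speed_q ^ 2) * (E + Ei)).
  { unfold Pf_tt, Pf, f_even. ring. }
  rewrite hf, htt in hsum.
  assert (hE : 0 < E + Ei).
  { pose proof (exp_pos (phase_q t x)). pose proof (exp_pos (- phase_q t x)). unfold E, Ei. lra. }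
  pose proof Sab_pos. pose proof dnv_pos. pose proof speed_sq_pos.
  assert (h0 : Af * (speed_p ^ 2 + speed_q ^ 2) * (E + Ei) = 0) by lra. unfold Af in h0.
  repeat (apply Rmult_integral in h0; destruct h0 as [h0 | h0]); lra.
Qed.

Lemma ffun_eq (t x : R) : ffun a b m x1 x2 t x = ev Pf t x / kappa.
Proof.
  unfold ffun, Fmu, cosh, ev, at_phases, Pf, f_even, kappa, Af, Bf.
  fold (phase_p t x) (phase_q t x) Sab dnv rt2.
  pose proof Sab_pos. pose proof dnv_pos. field. repeat split; lra.
Qed.

Lemma gfun_eq (t x : R) : gfun a b m x1 x2 t x = ev Pg t x / kappa.
Proof.
  unfold gfun, Gmu, ev, at_phases, Pg, g_sin, kappa, Af, Cg, Dg.
  fold (phase_p t x) (phase_q t x) Sab dnv rt2. rewrite <- dnv_sq.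
  pose proof Sab_pos. pose proof dnv_pos. field. repeat split; lra.
Qed.

Lemma is_derive_ev_div (P Q : phase_poly) (t x : R) :
  is_derive (fun y => ev P t y) x (ev Q t x) ->
  is_derive (fun y => ev P t y / kappa) x (ev Q t x / kappa).
Proof.
  intro h. apply (is_derive_ext (fun y => / kappa * ev P t y)); [intro y; apply Rmult_comm|].
  replace (ev Q t x / kappa) with (/ kappa * ev Q t x) by (unfold Rdiv; ring).
  apply is_derive_scal, h.
Qed.

Lemma Bnv_eq (t x : R) :
  Bnv a b m x1 x2 t x = m + 2 * rt2 * arg_deriv (ev Pf t x) (ev Pf_x t x) (ev Pg t x) (ev Pg_x t x).
Proof.
  assert (hdf : Derive (fun y => ffun a b m x1 x2 t y) x = ev Pf_x t x / kappa).
  { rewrite (Derive_ext _ _ _ (ffun_eq t)).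
    apply is_derive_unique, is_derive_ev_div, is_derive_Pf_x. }
  assert (hdg : Derive (fun y => gfun a b m x1 x2 t y) x = ev Pg_x t x / kappa).
  { rewrite (Derive_ext _ _ _ (gfun_eq t)).
    apply is_derive_unique, is_derive_ev_div, is_derive_Pg_x. }
  unfold Bnv, arg_deriv. rewrite hdf, hdg, ffun_eq, gfun_eq.
  pose proof kappa_neq_0. pose proof (Pf_Pg_norm_neq_0 t x). fold rt2. field. split; assumption.
Qed.

Lemma is_derive_Bnv_x (t x : R) :
  is_derive (fun y => Bnv a b m x1 x2 t y) x
    (2 * rt2 * arg_deriv2 (ev Pf t x) (ev Pf_x t x) (ev Pf_xx t x)
                          (ev Pg t x) (ev Pg_x t x) (ev Pg_xx t x)).
Proof.
  apply (is_derive_ext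
           (fun y => m + 2 * rt2 * arg_deriv (ev Pf t y) (ev Pf_x t y) (ev Pg t y) (ev Pg_x t y))).
  { intro y. symmetry. apply Bnv_eq. }
  apply is_derive_affine, (is_derive_arg_deriv (fun y => ev Pf t y) (fun y => ev Pf_x t y)
                                              (fun y => ev Pg t y) (fun y => ev Pg_x t y)).
  - apply is_derive_Pf_x.
  - apply is_derive_Pf_xx.
  - apply is_derive_Pg_x.
  - apply is_derive_Pg_xx.
  - apply Pf_Pg_norm_neq_0.
Qed.

Lemma Derive_xt_Bnv (t x : R) :
  Derive (fun s => Derive (fun y => Bnv a b m x1 x2 s y) x) t
  = 2 * rt2 * arg_deriv3 (ev Pf t x) (ev Pf_x t x) (ev Pf_xx t x)
                         (ev Pf_t t x) (ev Pf_xt t x) (ev Pf_xxt t x)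
                         (ev Pg t x) (ev Pg_x t x) (ev Pg_xx t x)
                         (ev Pg_t t x) (ev Pg_xt t x) (ev Pg_xxt t x).
Proof.
  rewrite (Derive_ext _ _ _ (fun s => is_derive_unique _ _ _ (is_derive_Bnv_x s x))).
  apply is_derive_unique, is_derive_scal.
  apply (is_derive_arg_deriv2 (fun s => ev Pf s x) (fun s => ev Pf_x s x) (fun s => ev Pf_xx s x)
                              (fun s => ev Pg s x) (fun s => ev Pg_x s x) (fun s => ev Pg_xx s x)).
  - apply is_derive_Pf_t.
  - apply is_derive_Pf_xt.
  - apply is_derive_Pf_xxt.
  - apply is_derive_Pg_t.
  - apply is_derive_Pg_xt.
  - apply is_derive_Pg_xxt.
  - apply Pf_Pg_norm_neq_0.
Qed.

Lemma is_lim_scaled_ev (l : R -> R) (P : phase_poly) (t L c1 c2 u v : R) :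
  is_lim l m_infty 0 ->
  (forall y, l y * ev P t y
             = L + c1 * (l y * (u * sin (phase_p t y) + v * cos (phase_p t y)))
               + c2 * (l y * l y)) ->
  is_lim (fun y => l y * ev P t y) m_infty L.
Proof.
  intros hl hP. apply (is_lim_ext _ _ _ _ (fun y => eq_sym (hP y))).
  apply (is_lim_perturbation l _ _ L c1 c2 (Rabs u + Rabs v) hl).
  intro y. apply Rabs_trig_comb_le.
Qed.

Ltac expand_scaled_ev :=
  intro; cbv beta;
  unfold ev, at_phases, Pf, Pf_x, Pg, Pg_x, f_even, f_odd, g_sin, g_cos;
  match goal with
  | |- context [exp (phase_q ?t ?y)] =>
      let hE := fresh in pose proof (exp_mul_exp_opp (phase_q t y)) as hE; ring [hE]
  end.

(* As [x -> -oo] the dominant exponential is [exp (- |beta| x)]; scaled by its inverse, [Pf]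
   tends to [Af] and only the [exp (beta x)] part of [Pg] can survive. *)
Lemma is_lim_logabs_deriv_m_infty (t : R) :
  is_lim (fun y => logabs_deriv (ev Pf t y) (ev Pf_x t y) (ev Pg t y) (ev Pg_x t y))
    m_infty (- Rabs b).
Proof.
  pose proof Af_neq_0 as hA. pose proof (pow2_gt_0 _ hA) as hA2.
  destruct (Rlt_or_le 0 b) as [hb | hb].
  - assert (hl : is_lim (fun y => exp (phase_q t y)) m_infty 0).
    { apply (is_lim_ext (fun y => exp (b * y + (speed_q * t + b * x2)))).
      - intro y. rewrite phase_q_x. reflexivity.
      - apply is_lim_exp_affine, hb. }
    replace (- Rabs b) with (logabs_deriv Af (- (Af * b)) 0 0)
      by (rewrite Rabs_pos_eq by lra; unfold logabs_deriv; field; exact hA).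
    apply (is_lim_logabs_deriv (fun y => exp (phase_q t y))).
    + intro y. apply exp_neq_0.
    + apply (is_lim_scaled_ev _ Pf t Af (- Bf) Af (- b) a hl). expand_scaled_ev.
    + apply (is_lim_scaled_ev _ Pf_x t (- (Af * b)) (Bf * a) (Af * b) a b hl). expand_scaled_ev.
    + apply (is_lim_scaled_ev _ Pg t 0 Cg (- Dg) 1 0 hl). expand_scaled_ev.
    + apply (is_lim_scaled_ev _ Pg_x t 0 (Cg * a) (- (Dg * b)) 0 1 hl). expand_scaled_ev.
    + lra.
  - assert (hb' : 0 < - b) by (destruct hb; [lra | exfalso; auto]).
    assert (hl : is_lim (fun y => exp (- phase_q t y)) m_infty 0).
    { apply (is_lim_ext (fun y => exp (- b * y + - (speed_q * t + b * x2)))).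
      - intro y. rewrite phase_q_x. f_equal. ring.
      - apply is_lim_exp_affine, hb'. }
    replace (- Rabs b) with (logabs_deriv Af (Af * b) (- Dg) (- (Dg * b)))
      by (rewrite Rabs_left by lra; unfold logabs_deriv; field; pose proof (pow2_ge_0 (- Dg)); lra).
    apply (is_lim_logabs_deriv (fun y => exp (- phase_q t y))).
    + intro y. apply exp_neq_0.
    + apply (is_lim_scaled_ev _ Pf t Af (- Bf) Af (- b) a hl). expand_scaled_ev.
    + apply (is_lim_scaled_ev _ Pf_x t (Af * b) (Bf * a) (- (Af * b)) a b hl). expand_scaled_ev.
    + apply (is_lim_scaled_ev _ Pg t (- Dg) Cg 0 1 0 hl). expand_scaled_ev.
    + apply (is_lim_scaled_ev _ Pg_x t (- (Dg * b)) (Cg * a) 0 0 1 hl). expand_scaled_ev.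
    + pose proof (pow2_ge_0 (- Dg)). lra.
Qed.

Lemma is_derive_logabs_deriv_x (t y : R) :
  is_derive (fun z => 4 * logabs_deriv (ev Pf t z) (ev Pf_x t z) (ev Pg t z) (ev Pg_x t z)) y
    (Bnv a b m x1 x2 t y ^ 2 - m ^ 2).
Proof.
  rewrite Bnv_eq, <- (mass_identity m rt2 _ _ (ev Pf_xx t y) _ _ (ev Pg_xx t y)
                                    rt2_sq (Pf_Pg_norm_neq_0 t y)).
  - apply is_derive_scal, (is_derive_logabs_deriv (fun z => ev Pf t z) (fun z => ev Pf_x t z)
                                                   (fun z => ev Pg t z) (fun z => ev Pg_x t z)).
    + apply is_derive_Pf_x.
    + apply is_derive_Pf_xx.
    + apply is_derive_Pg_x.
    + apply is_derive_Pg_xx.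
    + apply Pf_Pg_norm_neq_0.
  - unfold ev, at_phases. apply mass_numerator_vanishes; [apply sin_sq | apply exp_mul_exp_opp].
Qed.

Lemma Mnv_eq (t x : R) :
  Mnv a b m x1 x2 t x
  = 2 * Rabs b + 2 * logabs_deriv (ev Pf t x) (ev Pf_x t x) (ev Pg t x) (ev Pg_x t x).
Proof.
  set (H := fun z => 4 * logabs_deriv (ev Pf t z) (ev Pf_x t z) (ev Pg t z) (ev Pg_x t z)).
  assert (hI : is_RInt_gen (fun s => Bnv a b m x1 x2 t s ^ 2 - m ^ 2)
                 (Rbar_locally m_infty) (at_point x) (H x - 4 * - Rabs b)).
  { apply (is_RInt_gen_ext (Derive H)).
    { apply filter_forall. intros _ y _. apply is_derive_unique, is_derive_logabs_deriv_x. }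
    apply is_RInt_gen_Derive.
    - apply filter_forall. intros _ y _. exact (ex_intro _ _ (is_derive_logabs_deriv_x t y)).
    - apply filter_forall. intros _ y _.
      apply (continuous_ext (fun z => Bnv a b m x1 x2 t z ^ 2 - m ^ 2)).
      { intro z. symmetry. apply is_derive_unique, is_derive_logabs_deriv_x. }
      apply (@ex_derive_continuous R_AbsRing R_NormedModule). auto_derive.
      exact (ex_intro _ _ (is_derive_Bnv_x t y)).
    - exact (is_lim_scal_l _ 4 _ _ (is_lim_logabs_deriv_m_infty t)).
    - intros P hP. exact (locally_singleton _ _ hP). }
  unfold Mnv. rewrite (is_RInt_gen_unique _ _ hI). unfold H. field.
Qed.

Lemma Derive_t_Mnv (t x : R) :
  Derive (fun s => Mnv a b m x1 x2 s x) t
  = 2 * logabs_deriv2 (ev Pf t x) (ev Pf_x t x) (ev Pf_t t x) (ev Pf_xt t x)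
                      (ev Pg t x) (ev Pg_x t x) (ev Pg_t t x) (ev Pg_xt t x).
Proof.
  rewrite (Derive_ext _ _ _ (fun s => Mnv_eq s x)).
  apply is_derive_unique,
    (is_derive_affine (fun s => logabs_deriv (ev Pf s x) (ev Pf_x s x) (ev Pg s x) (ev Pg_x s x))),
    (is_derive_logabs_deriv (fun s => ev Pf s x) (fun s => ev Pf_x s x)
                            (fun s => ev Pg s x) (fun s => ev Pg_x s x)).
  - apply is_derive_Pf_t.
  - apply is_derive_Pf_xt.
  - apply is_derive_Pg_t.
  - apply is_derive_Pg_xt.
  - apply Pf_Pg_norm_neq_0.
Qed.

Lemma Derive_t_Btilde (Bt : R -> R -> R) (HBt : is_Btilde a b m x1 x2 Bt) (t x : R) :
  Derive (fun s => Bt s x) t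
  = 2 * rt2 * arg_deriv (ev Pf t x) (ev Pf_t t x) (ev Pg t x) (ev Pg_t t x).
Proof.
  destruct HBt as [hcont hbranch].
  apply is_derive_unique, (is_derive_continuous_arg (fun s => ev Pf s x) (fun s => ev Pf_t s x)
    (fun s => ev Pf_tt s x) (fun s => ev Pg s x) (fun s => ev Pg_t s x) (fun s => Bt s x) (m * x)).
  - assert (0 < rt2) by (apply sqrt_lt_R0; lra). lra.
  - intro s. apply is_derive_Pf_t.
  - intro s. apply is_derive_Pf_tt.
  - intro s. apply is_derive_Pg_t.
  - intro s. apply Pf_tt_neq_0_at_zero.
  - apply Pf_Pg_norm_pos.
  - intro s. apply (continuous_comp_2 (fun s => s) (fun _ => x) Bt);
      [apply continuous_id | apply continuous_const | apply hcont].
  - intros s hf. pose proof kappa_neq_0.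
    assert (hff : ffun a b m x1 x2 s x <> 0)
      by (rewrite ffun_eq; unfold Rdiv; apply Rmult_integral_contrapositive_currified;
          [exact hf | apply Rinv_neq_0_compat; assumption]).
    destruct (hbranch s x hff) as [k hk]. exists k.
    rewrite hk, ffun_eq, gfun_eq.
    replace (ev Pg s x / kappa / (ev Pf s x / kappa))
      with (ev Pg s x / ev Pf s x) by (field; split; assumption).
    reflexivity.
Qed.

End Breather.

Theorem lemma3p4 (alpha beta mu x1 x2 : R)
  (Ha : alpha <> 0) (Hb : beta <> 0) (Hm : mu <> 0)
  (HD : Dnv alpha beta mu > 0)
  (Bt : R -> R -> R) (HBt : is_Btilde alpha beta mu x1 x2 Bt) :
  forall t x : R,
    Derive (fun s => Derive (fun y => Bnv alpha beta mu x1 x2 s y) x) t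
    + 2 * Derive (fun s => Mnv alpha beta mu x1 x2 s x) t * Bnv alpha beta mu x1 x2 t x
    = (2 * (beta ^ 2 - alpha ^ 2) + 5 * mu ^ 2) * Derive (fun s => Bt s x) t
      + ((alpha ^ 2 + beta ^ 2) ^ 2
         + 6 * mu ^ 2 * (beta ^ 2 - alpha ^ 2 + 3 / 2 * mu ^ 2))
        * (Bnv alpha beta mu x1 x2 t x - mu).
Proof.
  intros t x.
  rewrite Derive_xt_Bnv, Derive_t_Mnv, (Derive_t_Btilde _ _ _ _ _ Ha Hb HD Bt HBt), Bnv_eq
    by assumption.
  apply mkdv_identity.
  - apply rt2_sq.
  - apply Pf_Pg_norm_neq_0; assumption.
  - unfold ev, at_phases.
    apply mkdv_numerator_vanishes; [assumption | apply sin_sq | apply exp_mul_exp_opp].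
Qed.
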